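(* Let $X\in\mathbb{R}^{n\times d}$ and let $f:\mathbb{R}^n\to(-\infty,\infty]$, $g:\mathbb{R}^d\to(-\infty,\infty]$ be proper lower semicontinuous convex functions such that there exists $\beta\in\mathrm{relint}(\mathrm{dom}(g))$ with $X\beta\in\mathrm{relint}(\mathrm{dom}(f))$, and such that $P(\beta):=f(X\beta)+g(\beta)$ attains its infimum over $\mathbb{R}^d$. Let $D(\theta):=-f^\star(-\theta)-g^\star(X^\top\theta)$, assume $f^\star$ is $L$-strongly convex for some $L\ge0$, and let $\hat\theta$ be a maximizer of $D$ over $\mathbb{R}^n$. Let $u:\mathbb{R}^n\to[-\infty,\infty]$ satisfy $D(\theta)\le u(\theta)$ for all $\theta\in\mathbb{R}^n$. Then for every $\tilde\theta\in\mathbb{R}^n$, \[ \hat\theta\in\mathcal{R}(\tilde\theta,u):=\{\theta\mid l(\theta;\tilde\theta)\le u(\theta)\},\qquad l(\theta;\tilde\theta)=\frac{L}{2}\|\theta-\tilde\theta\|_2^2+D(\tilde\theta). \]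
   Context: $h^\star(v)=\sup_z v^\top z-h(z)$ denotes the Fenchel conjugate; $\mathrm{dom}(h)=\{z:|h(z)|<\infty\}$; $\mathrm{relint}$ denotes relative interior. *)

From HB Require Import structures.
From mathcomp Require Import all_boot all_order all_algebra.
From mathcomp Require Import all_classical all_reals all_analysis.
Set Implicit Arguments. Unset Strict Implicit. Unset Printing Implicit Defensive.
Import Order.TTheory GRing.Theory Num.Theory.
Import numFieldNormedType.Exports.
Local Open Scope classical_set_scope.
Local Open Scope ring_scope.

Section Defs.
Variable R : realType.

Definition dotv n (u v : 'cV[R]_n) : R := \sum_(i < n) u i 0 * v i 0.
Definition sqnorm2 n (v : 'cV[R]_n) : R := \sum_(i < n) v i 0 ^+ 2.
Definition norm2 n (v : 'cV[R]_n) : R := Num.sqrt (sqnorm2 v).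

Local Open Scope ereal_scope.

Definition proper_fun n (h : 'cV[R]_n -> \bar R) : Prop :=
  (forall x, -oo < h x) /\ (exists x, h x < +oo).

Definition econvex n (h : 'cV[R]_n -> \bar R) : Prop :=
  forall (x y : 'cV[R]_n) (t : R), (0 < t < 1)%R ->
    h (t *: x + (1 - t) *: y)%R <= t%:E * h x + (1 - t)%:E * h y.

Definition strongly_convex n (L : R) (h : 'cV[R]_n -> \bar R) : Prop :=
  econvex (fun x => h x - ((L / 2) * sqnorm2 x)%:E).

Definition fconj n (h : 'cV[R]_n -> \bar R) (v : 'cV[R]_n) : \bar R :=
  ereal_sup [set ((dotv v z)%:E - h z)%E | z in [set: 'cV[R]_n]].

Definition edom n (h : 'cV[R]_n -> \bar R) : set 'cV[R]_n :=
  [set z | h z \is a fin_num].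

Local Close Scope ereal_scope.

Definition aff_hull n (C : set 'cV[R]_n) : set 'cV[R]_n :=
  [set x | exists (k : nat) (p : 'I_k -> 'cV[R]_n) (w : 'I_k -> R),
     (forall i, C (p i)) /\ \sum_(i < k) w i = 1 /\
     x = \sum_(i < k) w i *: p i].

Definition relint n (C : set 'cV[R]_n) : set 'cV[R]_n :=
  [set x | C x /\ exists e : R, 0 < e /\
     forall y, aff_hull C y -> norm2 (y - x) < e -> C y].

End Defs.

From HB Require Import structures.
From mathcomp Require Import all_boot all_order all_algebra.
From mathcomp Require Import all_classical all_reals all_analysis.
From mathcomp Require Import ring lra.
Set Implicit Arguments. Unset Strict Implicit. Unset Printing Implicit Defensive.
Import Order.TTheory GRing.Theory Num.Theory.
Import numFieldNormedType.Exports.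
Local Open Scope classical_set_scope.
Local Open Scope ring_scope.

(* Since f^* is L-strongly convex and g^* is convex, the dual objective
   D(theta) = -f^*(-theta) - g^*(X^T theta) is L-strongly concave; a strongly
   concave function lies at least (L/2) ||theta - theta_hat||^2 below its value
   at a maximizer theta_hat, so D(theta_tilde) + (L/2) ||theta_hat - theta_tilde||^2
   <= D(theta_hat) <= u(theta_hat).  Concavity is only needed at points where D
   is finite. *)

Lemma strongly_concave_max_gap (R : realFieldType) (V : lmodType R)
    (phi : V -> \bar R) (xh x : V) (w : R) :
  0 <= w ->
  (forall a b t, 0 < t < 1 -> phi xh = a%:E -> phi x = b%:E ->
     ((t * a + (1 - t) * b + t * (1 - t) * w)%:E
      <= phi (t *: xh + (1 - t) *: x)%R)%E) ->
  (forall y, (phi y <= phi xh)%E) ->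
  (w%:E + phi x <= phi xh)%E.
Proof.
move=> w_ge0 concave xh_max.
have := xh_max x.
case Ex: (phi x) => [b| |]; last 2 first.
- by [].
- by rewrite /= leNye.
case Exh: (phi xh) => [a| |] // _; last by rewrite leey.
have gap_ge : forall t, 0 < t < 1 -> t * w <= a - b.
  move=> t t01; have /andP[t0 t1] := t01.
  have := le_trans (concave a b t t01 Exh Ex) (xh_max _).
  rewrite Exh lee_fin => le_a.
  have : (1 - t) * (t * w - (a - b)) <= 0 by lra.
  by rewrite pmulr_rle0 ?subr_gt0 // subr_le0.
have : (w%:E <= (a - b)%:E)%E.
  apply/lee_mul01Pr; first by rewrite lee_fin.
  by move=> t t01; rewrite -EFinM lee_fin gap_ge.
by rewrite -EFinD !lee_fin; lra.
Qed.

Section Conjugate.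
Variables (R : realType) (n : nat).
Implicit Types (h : 'cV[R]_n -> \bar R) (x y v z : 'cV[R]_n).

Lemma dotvDl (a b : R) v1 v2 z :
  dotv (a *: v1 + b *: v2) z = a * dotv v1 z + b * dotv v2 z.
Proof.
rewrite /dotv !mulr_sumr -big_split; apply: eq_bigr => i _; rewrite !mxE /=; ring.
Qed.

Lemma sqnorm2_ge0 v : 0 <= sqnorm2 v.
Proof. by apply: sumr_ge0 => i _; apply: sqr_ge0. Qed.

Lemma sqnorm2N v : sqnorm2 (- v) = sqnorm2 v.
Proof. by apply: eq_bigr => i _; rewrite mxE sqrrN. Qed.

Lemma sqnorm2_convex_comb (t : R) x y :
  sqnorm2 (t *: x + (1 - t) *: y) =
  t * sqnorm2 x + (1 - t) * sqnorm2 y - t * (1 - t) * sqnorm2 (x - y).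
Proof.
rewrite /sqnorm2 !mulr_sumr -big_split -sumrB; apply: eq_bigr => i _.
rewrite !mxE /=; ring.
Qed.

Lemma strongly_convex_le (L : R) h x y a b t :
  strongly_convex L h -> 0 < t < 1 -> h x = a%:E -> h y = b%:E ->
  (h (t *: x + (1 - t) *: y)%R
   <= (t * a + (1 - t) * b - t * (1 - t) * (L / 2 * sqnorm2 (x - y)))%:E)%E.
Proof.
move=> h_cvx t01 hx hy; have := h_cvx x y t t01.
rewrite hx hy -!EFinB -!EFinM -EFinD lee_subel_addr // -EFinD.
by rewrite sqnorm2_convex_comb => /le_trans; apply; rewrite lee_fin; lra.
Qed.

Lemma fconj_ge h v z : ((dotv v z)%:E - h z <= fconj h v)%E.
Proof. by apply: ereal_sup_ubound; exists z. Qed.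

Lemma fconj_convex_le h v1 v2 s1 s2 t :
  0 < t < 1 -> fconj h v1 = s1%:E -> fconj h v2 = s2%:E ->
  (fconj h (t *: v1 + (1 - t) *: v2)%R <= (t * s1 + (1 - t) * s2)%:E)%E.
Proof.
move=> /andP[t0 t1] h1 h2; apply/ereal_supP => _ [z _ <-].
have := fconj_ge h v1 z; have := fconj_ge h v2 z; rewrite h1 h2.
case: (h z) => [r| |] //; last by move=> _ _; rewrite /= leNye.
rewrite -!EFinB !lee_fin dotvDl => le2 le1.
have t1' : 0 <= 1 - t by rewrite subr_ge0 ltW.
have := ler_wpM2l (ltW t0) le1; have := ler_wpM2l t1' le2.
nra.
Qed.

End Conjugate.

Section Dual.
Variables (R : realType) (n d : nat) (X : 'M[R]_(n, d)).
Variables (f : 'cV[R]_n -> \bar R) (g : 'cV[R]_d -> \bar R).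
Implicit Types (theta x y : 'cV[R]_n).

Definition dual_obj theta : \bar R :=
  (- fconj f (- theta) - fconj g (X^T *m theta))%E.

Lemma dual_obj_fin theta c : dual_obj theta = c%:E ->
  exists F G, [/\ fconj f (- theta) = F%:E, fconj g (X^T *m theta) = G%:E
                & c = - F - G].
Proof.
move=> Dc; have : dual_obj theta \is a fin_num by rewrite Dc.
rewrite fin_numB fin_numN => /andP[/fineK eF /fineK eG].
exists (fine (fconj f (- theta))), (fine (fconj g (X^T *m theta))).
split=> //; apply: EFin_inj; by rewrite -Dc /dual_obj EFinB EFinN eF eG.
Qed.

Lemma dual_obj_strongly_concave (L : R) x y a b t :
  strongly_convex L (fconj f) -> 0 < t < 1 ->
  dual_obj x = a%:E -> dual_obj y = b%:E ->
  ((t * a + (1 - t) * b + t * (1 - t) * (L / 2 * sqnorm2 (x - y)))%:E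
   <= dual_obj (t *: x + (1 - t) *: y)%R)%E.
Proof.
move=> f_strong t01 /dual_obj_fin[Fx [Gx [eFx eGx ->]]].
move=> /dual_obj_fin[Fy [Gy [eFy eGy ->]]].
have le_f := strongly_convex_le f_strong t01 eFx eFy.
have le_g := fconj_convex_le t01 eGx eGy.
rewrite -[- x - - y]opprD sqnorm2N !scalerN -opprD -leeN2 in le_f.
rewrite !scalemxAr -mulmxDr in le_g.
apply: le_trans (leeB le_f le_g).
by rewrite -EFinN -EFinB lee_fin; lra.
Qed.

End Dual.

Theorem theorem4 (R : realType) (n d : nat) (X : 'M[R]_(n, d))
  (f : 'cV[R]_n -> \bar R) (g : 'cV[R]_d -> \bar R)
  (f_proper : proper_fun f) (f_lsc : lower_semicontinuous f) (f_cvx : econvex f)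
  (g_proper : proper_fun g) (g_lsc : lower_semicontinuous g) (g_cvx : econvex g)
  (qualif : exists beta : 'cV[R]_d,
      relint (edom g) beta /\ relint (edom f) (X *m beta))
  (P_attains : exists beta0 : 'cV[R]_d, forall beta : 'cV[R]_d,
      (f (X *m beta0) + g beta0 <= f (X *m beta) + g beta)%E)
  (L : R) (L_ge0 : 0 <= L) (fconj_strong : strongly_convex L (fconj f))
  (theta_hat : 'cV[R]_n)
  (theta_hat_max : forall theta : 'cV[R]_n,
      (- fconj f (- theta) - fconj g (X^T *m theta)
       <= - fconj f (- theta_hat) - fconj g (X^T *m theta_hat))%E)
  (u : 'cV[R]_n -> \bar R)
  (u_ub : forall theta : 'cV[R]_n,
      (- fconj f (- theta) - fconj g (X^T *m theta) <= u theta)%E) :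
  forall theta_tilde : 'cV[R]_n,
    (((L / 2) * sqnorm2 (theta_hat - theta_tilde))%:E
      + (- fconj f (- theta_tilde) - fconj g (X^T *m theta_tilde))
     <= u theta_hat)%E.
Proof.
move=> theta_tilde; apply: le_trans (u_ub theta_hat).
have gap_ge0 : 0 <= L / 2 * sqnorm2 (theta_hat - theta_tilde).
  by rewrite mulr_ge0 ?divr_ge0 ?sqnorm2_ge0.
apply: (@strongly_concave_max_gap _ _ (dual_obj X f g)) => // a b t t01 Da Db.
exact: dual_obj_strongly_concave.
Qed.
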